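(* Let $r\in(0,1]^K$ and fix an action $a\in[K]$. Let $\theta_1\in\mathbb{R}^K$ and $\eta>0$, and define the sequence $\theta_{t+1} = \theta_t + \eta(\hat r_t - \hat b_t)$ where the sampled action is fixed to $a_t = a$ for all $t\ge1$, $\hat r_t(i) = \frac{\mathbb{I}\{a_t=i\}}{\pi_{\theta_t}(i)}r(i)$ and $\hat b_t(i) = \left(\frac{\mathbb{I}\{a_t=i\}}{\pi_{\theta_t}(i)}-1\right)\pi_{\theta_t}^\top r$ for $i\in[K]$. Then $1-\pi_{\theta_t}(a)\in\Omega(1/t)$, i.e. there is a constant $C>0$ with $1-\pi_{\theta_t}(a)\ge C/t$ for all sufficiently large $t$.
   Context: $\pi_\theta(i) = e^{\theta(i)}/\sum_{i'\in[K]}e^{\theta(i')}$ is the softmax policy on $[K]=\{1,\dots,K\}$, $K\ge2$. *)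

From mathcomp Require Import all_boot all_order all_algebra.
From mathcomp Require Import all_classical all_reals all_analysis.
Set Implicit Arguments. Unset Strict Implicit. Unset Printing Implicit Defensive.
Import Order.TTheory GRing.Theory Num.Theory.
Local Open Scope ring_scope.

Definition softmax (R : realType) (K : nat) (th : 'I_K -> R) (i : 'I_K) : R :=
  expR (th i) / \sum_(j < K) expR (th j).

Definition expected_reward (R : realType) (K : nat) (th r : 'I_K -> R) : R :=
  \sum_(j < K) softmax th j * r j.

Definition rhat (R : realType) (K : nat) (r th : 'I_K -> R) (a i : 'I_K) : R :=
  (if a == i then 1 else 0) / softmax th i * r i.

Definition bhat (R : realType) (K : nat) (r th : 'I_K -> R) (a i : 'I_K) : R :=
  ((if a == i then 1 else 0) / softmax th i - 1) * expected_reward th r.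

Definition pg_step (R : realType) (K : nat) (eta : R) (r : 'I_K -> R) (a : 'I_K)
  (th : 'I_K -> R) : 'I_K -> R :=
  fun i => th i + eta * (rhat r th a i - bhat r th a i).

(* pg_iter n = theta_{n+1}; pg_iter 0 = theta_1 *)
Fixpoint pg_iter (R : realType) (K : nat) (eta : R) (r : 'I_K -> R) (a : 'I_K)
  (th1 : 'I_K -> R) (n : nat) : 'I_K -> R :=
  match n with
  | 0 => th1
  | n'.+1 => pg_step eta r a (pg_iter eta r a th1 n')
  end.

From mathcomp Require Import all_boot all_order all_algebra.
From mathcomp Require Import all_classical all_reals all_analysis.
From mathcomp Require Import ring lra.
Import Order.TTheory GRing.Theory Num.Theory.
Set Implicit Arguments. Unset Strict Implicit.
Local Open Scope ring_scope.

(* When the sampled action is always a, every other coordinate of theta moves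
   by the same amount eta * pi_theta^T r, so the odds X = e^{theta a} / S of
   action a against the mass S of the others obey the autonomous recursion
   X' = X exp(c / X) for a constant c: the advantage mass N of a over the
   others is rescaled exactly like S, hence c = eta N / S never changes.
   Such a recursion grows at most linearly (exp(c / X) <= 1 + 2c / X once
   X >= 2c), and 1 - pi_theta(a) = 1 / (1 + X) then decays no faster than 1/t. *)

Lemma expR_le1D2x (R : realType) (u : R) :
  0 <= u -> u <= 2^-1 -> expR u <= 1 + 2 * u.
Proof.
move=> u_ge0 u_le.
have := expR_ge1Dx (- u).
have : expR u * expR (- u) = 1 by rewrite -expRD subrr expR0.
have := expR_gt0 u; have := expR_gt0 (- u).
nra.
Qed.

Section ExpRecursion.
Variables (R : realType) (c : R) (X : nat -> R).
Hypothesis X_gt0 : forall t, 0 < X t.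
Hypothesis X_rec : forall t, X t.+1 = X t * expR (c / X t).

Lemma exp_recursion_le0 : c <= 0 -> forall t, X t <= X 0.
Proof.
move=> c_le0; elim=> [//|t IH]; apply: le_trans IH.
rewrite X_rec; apply: ler_piMr; first exact: ltW.
by rewrite expR_le1 pmulr_lle0 ?invr_gt0.
Qed.

Lemma exp_recursion_ge0 : 0 <= c -> forall t, X 0 <= X t.
Proof.
move=> c_ge0; elim=> [//|t IH]; apply: le_trans IH _.
rewrite X_rec ler_peMr ?(ltW (X_gt0 t)) //.
have : 0 <= c / X t by rewrite divr_ge0 // ltW.
have := expR_ge1Dx (c / X t); lra.
Qed.

Lemma exp_recursion_step_le : 0 < c -> forall t,
  X t.+1 <= Num.max (X t + 2 * c) (2 * c * expR (c / X 0)).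
Proof.
move=> c_gt0 t; have Xt_gt0 := X_gt0 t; rewrite X_rec.
case: (leP (2 * c) (X t)) => [large|small].
- have cX_ge0 : 0 <= c / X t by rewrite divr_ge0 // ltW.
  have cX_le : c / X t <= 2^-1 by rewrite ler_pdivrMr //; lra.
  have -> : X t + 2 * c = X t * (1 + 2 * (c / X t)) by field; rewrite gt_eqF.
  by rewrite le_max ler_pM2l // expR_le1D2x.
- have : c / X t <= c / X 0.
    by rewrite ler_pM2l // lef_pV2 ?posrE // exp_recursion_ge0 // ltW.
  rewrite -ler_expR => exp_le.
  have := expR_gt0 (c / X t) => e_gt0.
  by rewrite le_max; apply/orP; right; nra.
Qed.

Lemma exp_recursion_linear_pos : 0 < c -> forall t,
  X t <= X 0 + 2 * c * expR (c / X 0) + 2 * c * t%:R.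
Proof.
move=> c_gt0; have := expR_gt0 (c / X 0); have := X_gt0 0 => X0_gt0 e_gt0.
elim=> [|t IH]; first by rewrite mulr0 addr0; nra.
apply: le_trans (exp_recursion_step_le c_gt0 t) _.
rewrite -addn1 natrD ge_max; apply/andP; split; first lra.
have : (0 : R) <= t%:R by rewrite ler0n.
nra.
Qed.

Lemma exp_recursion_linear_bound :
  exists A, 0 < A /\ forall t, X t <= A * t.+1%:R.
Proof.
have X0_gt0 := X_gt0 0.
have t1_ge1 t : (1 : R) <= t.+1%:R by rewrite ler1n.
case: (leP c 0) => [c_le0|c_gt0].
  exists (X 0); split=> // t; apply: le_trans (exp_recursion_le0 c_le0 t) _.
  by rewrite ler_peMr // ltW.
set B := X 0 + 2 * c * expR (c / X 0).
have B_gt0 : 0 < B by rewrite ltr_pwDl ?mulr_ge0 ?expR_ge0 // ltW.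
exists (B + 2 * c); split; first lra.
move=> t; apply: le_trans (exp_recursion_linear_pos c_gt0 t) _.
have t_ge0 : (0 : R) <= t%:R by rewrite ler0n.
have := mulr_ge0 (ltW B_gt0) t_ge0.
rewrite -/B -addn1 natrD; nra.
Qed.

End ExpRecursion.

Section SampledPolicyGradient.
Variables (R : realType) (K : nat).
Implicit Types (th r : 'I_K -> R) (a : 'I_K) (eta : R).

Definition other_mass th a : R := \sum_(j < K | j != a) expR (th j).

Definition advantage_mass r th a : R :=
  \sum_(j < K | j != a) expR (th j) * (r a - r j).

Definition odds th a : R := expR (th a) / other_mass th a.

Lemma partition_sum_split th a :
  \sum_(j < K) expR (th j) = expR (th a) + other_mass th a.
Proof. by rewrite (bigD1 a). Qed.

Lemma other_mass_ge0 th a : 0 <= other_mass th a.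
Proof. by apply: sumr_ge0 => j _; rewrite expR_ge0. Qed.

Lemma partition_sum_gt0 th a : 0 < \sum_(j < K) expR (th j).
Proof.
rewrite (partition_sum_split _ a).
by rewrite ltr_pwDl ?expR_gt0 ?other_mass_ge0.
Qed.

Lemma other_mass_gt0 th a : (2 <= K)%N -> 0 < other_mass th a.
Proof.
move=> K_ge2.
have [j j_neq_a] : exists j : 'I_K, j != a.
  have K_gt0 : (0 < K)%N by apply: leq_trans K_ge2.
  case: (eqVneq a (Ordinal K_gt0)) => [->|ne]; last by exists (Ordinal K_gt0); rewrite eq_sym.
  by exists (Ordinal K_ge2); rewrite -val_eqE.
rewrite /other_mass (bigD1 j) //=.
rewrite ltr_pwDl ?expR_gt0 //.
by apply: sumr_ge0 => i _; rewrite expR_ge0.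
Qed.

Lemma odds_gt0 th a : (2 <= K)%N -> 0 < odds th a.
Proof. by move=> K_ge2; rewrite divr_gt0 ?expR_gt0 ?other_mass_gt0. Qed.

Lemma one_sub_softmax th a : (2 <= K)%N -> 1 - softmax th a = (1 + odds th a)^-1.
Proof.
move=> K_ge2; rewrite /softmax /odds (partition_sum_split _ a).
have := other_mass_gt0 th a K_ge2; have := expR_gt0 (th a) => ? ?.
by field; rewrite !gt_eqF //; lra.
Qed.

Lemma advantage_massE r th a :
  r a - expected_reward th r = advantage_mass r th a / \sum_(j < K) expR (th j).
Proof.
have Z_neq0 := lt0r_neq0 (partition_sum_gt0 th a).
set Z := \sum_(j < K) expR (th j) in Z_neq0 *.
have -> : expected_reward th r = (\sum_(j < K) expR (th j) * r j) / Z.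
  rewrite /expected_reward mulr_suml; apply: eq_bigr => j _.
  by rewrite /softmax -/Z mulrAC.
have -> : advantage_mass r th a = r a * Z - \sum_(j < K) expR (th j) * r j.
  rewrite /advantage_mass /Z mulr_sumr -sumrB [RHS](bigD1 a) //= mulrC subrr add0r.
  by apply: eq_bigr => j _; ring.
by field; rewrite -/Z.
Qed.

Lemma pg_step_other eta r a th j : j != a ->
  pg_step eta r a th j = th j + eta * expected_reward th r.
Proof.
move=> j_neq_a; rewrite /pg_step /rhat /bhat eq_sym (negbTE j_neq_a).
rewrite !mul0r; ring.
Qed.

Lemma pg_step_sampled eta r a th :
  pg_step eta r a th a =
  th a + eta * expected_reward th r + eta * (advantage_mass r th a / expR (th a)).
Proof.
have := partition_sum_gt0 th a; have := expR_gt0 (th a) => ? ?.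
have -> : advantage_mass r th a / expR (th a) =
          (r a - expected_reward th r) / softmax th a.
  by rewrite advantage_massE /softmax; field; rewrite !gt_eqF.
rewrite /pg_step /rhat /bhat eqxx; ring.
Qed.

Lemma other_mass_pg_step eta r a th :
  other_mass (pg_step eta r a th) a = expR (eta * expected_reward th r) * other_mass th a.
Proof.
rewrite /other_mass mulr_sumr; apply: eq_bigr => j j_neq_a.
by rewrite pg_step_other // expRD mulrC.
Qed.

Lemma advantage_mass_pg_step eta r a th :
  advantage_mass r (pg_step eta r a th) a =
  expR (eta * expected_reward th r) * advantage_mass r th a.
Proof.
rewrite /advantage_mass mulr_sumr; apply: eq_bigr => j j_neq_a.
rewrite pg_step_other // expRD; ring.
Qed.

Hypothesis K_ge2 : (2 <= K)%N.

Lemma advantage_ratio_pg_step eta r a th :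
  advantage_mass r (pg_step eta r a th) a / other_mass (pg_step eta r a th) a =
  advantage_mass r th a / other_mass th a.
Proof.
rewrite other_mass_pg_step advantage_mass_pg_step.
have := other_mass_gt0 th a K_ge2; have := expR_gt0 (eta * expected_reward th r) => ? ?.
by field; rewrite !gt_eqF.
Qed.

Lemma odds_pg_step eta r a th :
  odds (pg_step eta r a th) a =
  odds th a * expR (eta * (advantage_mass r th a / other_mass th a) / odds th a).
Proof.
rewrite /odds other_mass_pg_step pg_step_sampled !expRD.
have := other_mass_gt0 th a K_ge2; have := expR_gt0 (eta * expected_reward th r).
have := expR_gt0 (th a) => ? ? ?.
have -> : eta * (advantage_mass r th a / other_mass th a) /
          (expR (th a) / other_mass th a) = eta * (advantage_mass r th a / expR (th a)).
  by field; rewrite !gt_eqF.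
by field; rewrite !gt_eqF.
Qed.

Lemma odds_pg_iter eta r a th1 t :
  odds (pg_iter eta r a th1 t.+1) a =
  odds (pg_iter eta r a th1 t) a *
  expR (eta * (advantage_mass r th1 a / other_mass th1 a) /
        odds (pg_iter eta r a th1 t) a).
Proof.
have ratio_const s : advantage_mass r (pg_iter eta r a th1 s) a /
    other_mass (pg_iter eta r a th1 s) a = advantage_mass r th1 a / other_mass th1 a.
  by elim: s => [//|s IH] /=; rewrite advantage_ratio_pg_step.
by rewrite /= odds_pg_step ratio_const.
Qed.

End SampledPolicyGradient.

Theorem lemma8 (R : realType) (K : nat) (hK : (2 <= K)%N)
  (r : 'I_K -> R) (hr : forall i, 0 < r i <= 1) (a : 'I_K)
  (th1 : 'I_K -> R) (eta : R) (heta : 0 < eta) :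
  exists C : R, 0 < C /\
    exists T : nat, forall t : nat, (T <= t)%N ->
      C / (t.+1)%:R <= 1 - softmax (pg_iter eta r a th1 t) a.
Proof.
pose X t := odds (pg_iter eta r a th1 t) a.
have X_gt0 t : 0 < X t by exact: odds_gt0.
have [A [A_gt0 X_le]] :=
  exp_recursion_linear_bound X_gt0 (odds_pg_iter hK eta r a th1).
exists (1 + A)^-1; split; first by rewrite invr_gt0; lra.
exists 0%N => t _; have := X_gt0 t; have := X_le t.
have : (1 : R) <= t.+1%:R by rewrite ler1n.
rewrite one_sub_softmax // -/(X t) -invfM => t1_ge1 X_lin Xt_gt0.
by rewrite lef_pV2 ?posrE; nra.
Qed.
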